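(* For every $n$, $\mathrm{ex}(n,(K_{2,3},C_5),K_3)=\mathcal N(K_{2,3},T_2(n))+\mathcal N(C_5,T_2(n))$.
   Context: $K_{2,3}$ is the complete bipartite graph with parts of sizes 2 and 3, $C_5$ the 5-cycle. $T_2(n)$ is the complete bipartite graph on $n$ vertices with parts of sizes $\lfloor n/2\rfloor$, $\lceil n/2\rceil$. $\mathcal N(H,G)$ is the number of subgraphs of $G$ isomorphic to $H$; $\mathrm{ex}(n,(H_1,H_2),K_3)$ is the maximum of $\mathcal N(H_1,G)+\mathcal N(H_2,G)$ over triangle-free $n$-vertex graphs $G$. *)

From mathcomp Require Import all_boot.
Set Implicit Arguments. Unset Strict Implicit. Unset Printing Implicit Defensive.

Definition simple_graph (V : finType) (E : rel V) : bool :=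
  [forall x, ~~ E x x] && [forall x, forall y, E x y == E y x].

Definition edges (V : finType) (E : rel V) : {set {set V}} :=
  [set [set x; y] | x in V, y in V & E x y].

Definition triangle_free (V : finType) (E : rel V) : bool :=
  ~~ [exists x, exists y, exists z, [&& E x y, E y z & E z x]].

(* Subgraphs (vertex set, edge set) of G = (V,E) isomorphic to H = (VH,EH):
   images of H under an injective vertex map whose edge image lies in E(G). *)
Definition copies (VH V : finType) (EH : rel VH) (E : rel V)
  : {set ({set V} * {set {set V}})} :=
  [set p | [exists f : {ffun VH -> V},
     [&& injectiveb f, p.1 == f @: [set: VH],
         p.2 == [set f @: e | e : {set VH} in edges EH] & p.2 \subset edges E]]].

Definition numcopies (VH V : finType) (EH : rel VH) (E : rel V) : nat :=
  #|copies EH E|.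

Definition K23_rel : rel ('I_2 + 'I_3)%type :=
  fun x y => match x, y with
             | inl _, inr _ | inr _, inl _ => true
             | _, _ => false end.

Definition C5_rel : rel 'I_5 :=
  fun i j => (val j == (val i).+1 %% 5) || (val i == (val j).+1 %% 5).

(* T_2(n): parts {i < n/2} (size floor(n/2)) and {i >= n/2} (size ceil(n/2)) *)
Definition T2_rel (n : nat) : rel 'I_n :=
  fun i j => (val i < n./2) != (val j < n./2).

Arguments T2_rel n : clear implicits.

Definition rel_of_set (n : nat) (S : {set 'I_n * 'I_n}) : rel 'I_n :=
  fun x y => (x, y) \in S.

Definition ex_K23_C5 (n : nat) : nat :=
  \max_(S : {set 'I_n * 'I_n} |
          simple_graph (rel_of_set S) && triangle_free (rel_of_set S))
     (numcopies K23_rel (rel_of_set S) + numcopies C5_rel (rel_of_set S)).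

(* Count embeddings instead of copies: a copy of K_{2,3} is the image of 12
   embeddings and a copy of C_5 of 10, so it suffices to bound
   5 emb(K_{2,3}) + 6 emb(C_5).  Embeddings of K_{2,3} are counted through
   codegrees of pairs of vertices, embeddings of C_5 through codegrees along an
   edge; in a triangle-free graph both counts are dominated by a sum over the
   edges bc of a weight depending only on deg b, deg c and the number of
   vertices adjacent to neither.  Among such triples with a fixed number n of
   vertices this weight is largest for T_2(n), and Mantel's theorem bounds the
   number of edges; all these inequalities are equalities for T_2(n)
   (for n = 5 up to rounding). *)
From mathcomp Require Import all_boot perm ssralg zmodp zify ring.
Set Implicit Arguments. Unset Strict Implicit. Unset Printing Implicit Defensive.

Import GRing.Theory.

(** * Copies and embeddings *)

Lemma imset_set2 (T U : finType) (f : T -> U) x y : f @: [set x; y] = [set f x; f y].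
Proof. by rewrite imsetU1 imset_set1. Qed.

Lemma imset_injT (T : finType) (s : T -> T) : injective s -> s @: [set: T] = [set: T].
Proof. by move=> injs; apply/eqP; rewrite eqEcard subsetT /= card_imset. Qed.

Lemma edgesP (V : finType) (E : rel V) e :
  reflect (exists x y, E x y /\ e = [set x; y]) (e \in edges E).
Proof.
apply: (iffP imset2P) => [[x y _] | [x [y [Exy ->]]]].
  by rewrite inE /= => Exy ->; exists x, y.
by exists x y; rewrite ?inE.
Qed.

Lemma edgeP (V : finType) (E : rel V) u v : symmetric E -> irreflexive E ->
  reflect (E u v) ([set u; v] \in edges E).
Proof.
move=> Esym Eirr; apply: (iffP idP) => [/edgesP [a [b [Eab e]]] | Euv]; last first.
  by apply/edgesP; exists u, v.
move: (set21 a b) (set22 a b); rewrite -e !inE.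
by case/orP=> /eqP ea; case/orP=> /eqP eb; move: Eab; rewrite ea eb ?Eirr // Esym.
Qed.

Lemma copies_eq_rel (VH V : finType) (EH : rel VH) (E E' : rel V) :
  E =2 E' -> copies EH E = copies EH E'.
Proof.
move=> EE'; rewrite /copies (_ : edges E = edges E') //.
apply/setP => e; apply/edgesP/edgesP => -[x [y [Exy ->]]]; exists x, y; split=> //.
  by rewrite -EE'.
by rewrite EE'.
Qed.

Section Embeddings.
Variables (VH V : finType) (EH : rel VH) (E : rel V).

Definition embedding (f : {ffun VH -> V}) : bool :=
  injectiveb f && [forall x, forall y, EH x y ==> E (f x) (f y)].

Definition embeddings : {set {ffun VH -> V}} := [set f | embedding f].

Lemma embeddingP (f : {ffun VH -> V}) :
  reflect (injective f /\ forall x y, EH x y -> E (f x) (f y)) (embedding f).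
Proof.
apply: (iffP andP) => [[/injectiveP inj /'forall_forallP hom] | [inj hom]].
  by split=> // x y; apply/implyP.
split; first exact/injectiveP.
by apply/'forall_forallP => x y; apply/implyP/hom.
Qed.

Definition copy_of (f : {ffun VH -> V}) : {set V} * {set {set V}} :=
  (f @: [set: VH], [set f @: e | e : {set VH} in edges EH]).

Lemma copy_of_embedding f : embedding f -> copy_of f \in copies EH E.
Proof.
move=> /embeddingP [inj hom]; rewrite inE; apply/existsP; exists f.
apply/and4P; split=> //; first exact/injectiveP.
apply/subsetP => _ /imsetP [_ /edgesP [x [y [EHxy ->]]] ->].
by rewrite imset_set2; apply/edgesP; exists (f x), (f y); split; first exact: hom.
Qed.

Hypotheses (Esym : symmetric E) (Eirr : irreflexive E).

Lemma copiesP p :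
  reflect (exists2 f, embedding f & copy_of f = p) (p \in copies EH E).
Proof.
apply: (iffP idP) => [|[f fE <-]]; last exact: copy_of_embedding.
rewrite inE => /existsP [f /and4P [/injectiveP inj /eqP p1 /eqP p2 sub]].
exists f; last by case: p p1 p2 {sub} => /= ? ? -> ->.
apply/embeddingP; split=> // x y EHxy; apply/edgeP => //.
by apply: (subsetP sub); rewrite p2 -imset_set2 imset_f //; apply/edgesP; exists x, y.
Qed.

End Embeddings.

Lemma embedding_edges (V : finType) (E : rel V) (s : {ffun V -> V}) :
  embedding E E s -> [set s @: e | e : {set V} in edges E] = edges E.
Proof.
move=> /embeddingP [inj hom]; apply/eqP.
rewrite eqEcard card_imset ?leqnn ?andbT; last exact: imset_inj.
apply/subsetP => _ /imsetP [_ /edgesP [x [y [Exy ->]]] ->].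
by rewrite imset_set2; apply/edgesP; exists (s x), (s y); split; first exact: hom.
Qed.

(* Composing an embedding with the automorphisms in A gives #|A| distinct
   embeddings with the same copy. *)
Lemma card_copies_mul_le (VH V : finType) (EH : rel VH) (E : rel V)
    (A : {set {ffun VH -> VH}}) :
  symmetric E -> irreflexive E -> A \subset embeddings EH EH ->
  #|copies EH E| * #|A| <= #|embeddings EH E|.
Proof.
move=> Esym Eirr /subsetP autA.
rewrite -[#|embeddings EH E|]sum1_card (partition_big (copy_of EH) (mem (copies EH E)));
  last by move=> f; rewrite inE; apply: copy_of_embedding.
rewrite -sum_nat_const; apply: leq_sum => _ /(@copiesP _ _ EH E Esym Eirr) [f fE <-].
have [injf homf] := embeddingP _ _ _ fE.
pose compose (s : {ffun VH -> VH}) : {ffun VH -> V} := [ffun x => f (s x)].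
have composeE s : compose s =1 f \o s by move=> x; rewrite ffunE.
rewrite sum1_card -(@card_in_imset _ _ compose A); last first.
  move=> s t _ _ /ffunP st; apply/ffunP => x; apply: injf.
  by move: (st x); rewrite !composeE.
apply/subset_leq_card/subsetP => _ /imsetP [s /autA + ->]; rewrite inE => sA.
have [injs homs] := embeddingP _ _ _ sA.
rewrite unfold_in inE; apply/andP; split.
  apply/embeddingP; split=> [x y|x y EHxy]; rewrite !composeE /=; first by move/injf/injs.
  by apply: homf; apply: homs.
apply/eqP; rewrite /copy_of; congr (_, _).
  by rewrite (eq_imset _ (composeE s)) imset_comp imset_injT.
rewrite -[in RHS](embedding_edges sA) -imset_comp; apply: eq_imset => e /=.
by rewrite (eq_imset _ (composeE s)) imset_comp.
Qed.

(** * Automorphisms of K_{2,3} and C_5 *)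

Definition K23_aut (st : {perm 'I_2} * {perm 'I_3}) : {ffun 'I_2 + 'I_3 -> 'I_2 + 'I_3} :=
  [ffun v => match v with inl i => inl (st.1 i) | inr j => inr (st.2 j) end].

Lemma K23_aut_inj : injective K23_aut.
Proof.
move=> [s t] [s' t'] /ffunP eq_st; congr (_, _); apply/permP => i.
  by have := eq_st (inl i); rewrite !ffunE => -[].
by have := eq_st (inr i); rewrite !ffunE => -[].
Qed.

Lemma K23_aut_embedding st : embedding K23_rel K23_rel (K23_aut st).
Proof.
apply/embeddingP; split=> [[i|j] [i'|j']|[i|j] [i'|j'] //]; rewrite !ffunE // => -[].
  by move/perm_inj->.
by move/perm_inj->.
Qed.

Lemma card_copies_K23_le (V : finType) (E : rel V) : symmetric E -> irreflexive E ->
  #|copies K23_rel E| * 12 <= #|embeddings K23_rel E|.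
Proof.
move=> Esym Eirr; have := card_copies_mul_le (A := K23_aut @: [set: _]) Esym Eirr.
rewrite card_imset; last exact: K23_aut_inj.
rewrite cardsT card_prod !card_Sn; apply.
by apply/subsetP => _ /imsetP [st _ ->]; rewrite inE; apply: K23_aut_embedding.
Qed.

Lemma C5_relD (k i j : 'I_5) : C5_rel (k + i)%R (k + j)%R = C5_rel i j.
Proof. by rewrite /C5_rel /=; move: (ltn_ord k) (ltn_ord i) (ltn_ord j); lia. Qed.

Lemma C5_relN (i j : 'I_5) : C5_rel (- i)%R (- j)%R = C5_rel i j.
Proof. by rewrite /C5_rel /=; move: (ltn_ord i) (ltn_ord j); lia. Qed.

Definition C5_aut (kb : 'I_5 * bool) : {ffun 'I_5 -> 'I_5} :=
  [ffun i : 'I_5 => if kb.2 then (kb.1 - i)%R else (kb.1 + i)%R].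

Lemma C5_aut_inj : injective C5_aut.
Proof.
move=> [k b] [k' b'] /ffunP eq_kb.
have ek : k = k'.
  by have := eq_kb 0%R; rewrite !ffunE /= !(subr0, addr0); case: b b' {eq_kb} => [] [].
subst k'; congr (_, _); apply: contra_eq (eq_kb 1%R) => /negPf bb'.
by rewrite !ffunE; case: b b' {eq_kb} bb' => [] [] //= _; rewrite (inj_eq (addrI k)).
Qed.

Lemma C5_aut_embedding kb : embedding C5_rel C5_rel (C5_aut kb).
Proof.
case: kb => k b; apply/embeddingP; split=> [i j|i j]; rewrite !ffunE /=.
  by case: b => /addrI //; apply: oppr_inj.
by case: b; rewrite C5_relD ?C5_relN.
Qed.

Lemma card_copies_C5_le (V : finType) (E : rel V) : symmetric E -> irreflexive E ->
  #|copies C5_rel E| * 10 <= #|embeddings C5_rel E|.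
Proof.
move=> Esym Eirr; have := card_copies_mul_le (A := C5_aut @: [set: _]) Esym Eirr.
rewrite card_imset; last exact: C5_aut_inj.
rewrite cardsT card_prod card_ord card_bool; apply.
by apply/subsetP => _ /imsetP [kb _ ->]; rewrite inE; apply: C5_aut_embedding.
Qed.

(** * Counting embeddings in a triangle-free graph *)

Lemma card_fibers (T K : finType) (A : {set T}) (key : T -> K) :
  #|A| = \sum_j #|[set x in A | key x == j]|.
Proof.
rewrite -sum1_card (partition_big key predT) //; apply: eq_bigr => j _.
by rewrite -sum1_card; apply: eq_bigl => x; rewrite inE.
Qed.

Lemma card_fibers2 (T K1 K2 : finType) (A : {set T}) (k1 : T -> K1) (k2 : T -> K2) :
  #|A| = \sum_i \sum_j #|[set x in A | (k1 x == i) && (k2 x == j)]|.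
Proof.
rewrite (card_fibers _ (fun x => (k1 x, k2 x))) pair_big /=.
by apply: eq_bigr => -[i j] _; apply: eq_card => x; rewrite !inE xpair_eqE.
Qed.

Lemma ffact3_le c d : c <= d -> c ^_ 3 <= d.-1 * d.-2 * c.
Proof.
move=> cd; rewrite !ffactnS ffactn0 muln1 mulnC leq_mul //.
by apply: leq_mul; rewrite -!subn1 ?leq_sub2r // -subnDA leq_sub2r.
Qed.

Section Neighbourhoods.
Variables (V : finType) (E : rel V).

Definition nbhd u := [set w | E u w].
Definition deg u := #|nbhd u|.
Definition codeg u v := #|nbhd u :&: nbhd v|.
Definition nonadj u v := #|~: (nbhd u :|: nbhd v)|.

Lemma card_embeddings_K23_le :
  #|embeddings K23_rel E| <= \sum_u \sum_(v | v != u) codeg u v ^_ 3.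
Proof.
rewrite (card_fibers2 _ (fun f : {ffun _ -> V} => f (inl ord0)) (fun f => f (inl ord_max))).
apply: leq_sum => u _; rewrite (bigID (fun v => v != u)) /=.
rewrite [X in _ + X]big1 ?addn0 => [|v /negbNE /eqP ->]; last first.
  apply/eqP; rewrite cards_eq0; apply/eqP/setP => f; rewrite in_set0 !inE.
  by apply/negP => /andP [/embeddingP [injf _] /andP [/eqP <- /eqP /injf]].
apply: leq_sum => v _.
have -> : codeg u v ^_ 3 =
    #|[set g : {ffun 'I_3 -> V} in ffun_on (mem (nbhd u :&: nbhd v)) | injectiveb g]|.
  by rewrite card_inj_ffuns_on card_ord.
pose restr (f : {ffun 'I_2 + 'I_3 -> V}) : {ffun 'I_3 -> V} := [ffun j => f (inr j)].
rewrite -(@card_in_imset _ _ restr); last first.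
  move=> f g; rewrite !inE => /andP [_ /andP [/eqP fu /eqP fv]].
  move=> /andP [_ /andP [/eqP gu /eqP gv]] /ffunP fg.
  apply/ffunP => [[i|j]]; last by have := fg j; rewrite !ffunE.
  have [->|->] : i = ord0 \/ i = ord_max.
    by case: i => [[|[|//]] i2]; [left | right]; apply: val_inj.
  - by rewrite fu gu.
  - by rewrite fv gv.
apply/subset_leq_card/subsetP => _ /imsetP [f fF ->]; rewrite !inE in fF.
case/andP: fF => /embeddingP [injf homf] /andP [/eqP fu /eqP fv].
rewrite inE; apply/andP; split.
  by apply/ffun_onP => j; rewrite ffunE !inE -fu -fv !homf.
by apply/injectiveP => i j; rewrite !ffunE => /injf [].
Qed.

Lemma card_embeddings_C5_le :
  #|embeddings C5_rel E| <= \sum_b \sum_(c | E b c) \sum_a codeg a b * codeg a c.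
Proof.
(* Fix the edge (f 2, f 3) and the vertex f 0; then f 1 and f 4 are common
   neighbours of f 0 with f 2 and with f 3 respectively. *)
pose c5 k : 'I_5 := Ordinal (ltn_pmod k (isT : 0 < 5)).
rewrite (card_fibers2 _ (fun f : {ffun _ -> V} => f (c5 2)) (fun f => f (c5 3))).
apply: leq_sum => b _; rewrite (bigID (E b)) /=.
rewrite [X in _ + X]big1 ?addn0 => [|c /negbTE nEbc]; last first.
  apply/eqP; rewrite cards_eq0; apply/eqP/setP => f; rewrite in_set0 !inE.
  apply/negP => /andP [/embeddingP [_ homf] /andP [/eqP fb /eqP fc]].
  by move: nEbc; rewrite -fb -fc homf.
apply: leq_sum => c Ebc; rewrite (card_fibers _ (fun f : {ffun _ -> V} => f (c5 0))).
apply: leq_sum => a _; rewrite /codeg -cardsX.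
pose restr (f : {ffun 'I_5 -> V}) := (f (c5 1), f (c5 4)).
rewrite -(@card_in_imset _ _ restr); last first.
  move=> f g; rewrite !inE.
  move=> /andP [/andP [_ /andP [/eqP fb /eqP fc]] /eqP fa].
  move=> /andP [/andP [_ /andP [/eqP gb /eqP gc]] /eqP ga] [f1 f4].
  have c5E m (m5 : m < 5) : Ordinal m5 = c5 m by apply: val_inj; rewrite /= modn_small.
  apply/ffunP => -[[|[|[|[|[|//]]]]] i5]; rewrite c5E;
    by rewrite ?f1 ?f4 ?fa ?ga ?fb ?gb ?fc ?gc.
apply/subset_leq_card/subsetP => _ /imsetP [f fF ->]; rewrite !inE in fF.
case/andP: fF => /andP [/embeddingP [_ homf] /andP [/eqP fb /eqP fc]] /eqP fa.
by rewrite !inE -fa -fb -fc !homf.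
Qed.

Hypothesis Esym : symmetric E.

Lemma degE u : deg u = \sum_(w | E u w) 1.
Proof. by rewrite sum1dep_card. Qed.

Lemma deg_gt0 u w : E u w -> 0 < deg w.
Proof. by move=> Euw; rewrite card_gt0; apply/set0Pn; exists u; rewrite inE Esym. Qed.

Lemma sum_edges_sym (F : V -> V -> nat) :
  \sum_b \sum_(c | E b c) F b c = \sum_b \sum_(c | E b c) F c b.
Proof.
rewrite (exchange_big_dep xpredT) //=; apply: eq_bigr => c _.
by apply: eq_bigl => b; rewrite Esym.
Qed.

Lemma codegE u v : codeg u v = \sum_(w | E u w && E v w) 1.
Proof. by rewrite sum1dep_card; apply: eq_card => w; rewrite !inE. Qed.

Lemma sum_codeg u : \sum_(v | v != u) codeg u v = \sum_(w | E u w) (deg w).-1.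
Proof.
have total : \sum_v codeg u v = \sum_(w | E u w) deg w.
  under eq_bigr do rewrite codegE.
  rewrite (exchange_big_dep (E u)) => [|v w _ /andP []] //=.
  by apply: eq_bigr => w Euw; rewrite degE; apply: eq_bigl => v; rewrite Euw Esym.
have split_deg : \sum_(w | E u w) deg w = deg u + \sum_(w | E u w) (deg w).-1.
  rewrite degE -big_split /=; apply: eq_bigr => w Euw.
  by rewrite add1n prednK // (deg_gt0 Euw).
by move: total; rewrite (bigD1 u) //= split_deg /codeg setIid => /addnI.
Qed.

Lemma sum_codeg_ffact3_le :
  \sum_u \sum_(v | v != u) codeg u v ^_ 3 <=
  \sum_u \sum_(w | E u w) (deg u).-1 * (deg u).-2 * (deg w).-1.
Proof.
apply: leq_sum => u _; rewrite -big_distrr -sum_codeg big_distrr /=.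
by apply: leq_sum => v _; apply/ffact3_le/subset_leq_card/subsetIl.
Qed.

Hypothesis no_triangle : forall x y z, E x y -> E y z -> E z x -> False.

Lemma codeg_edge0 a b : E a b -> codeg a b = 0.
Proof.
move=> Eab; apply/eqP; rewrite cards_eq0; apply/eqP/setP => w; rewrite !inE.
by apply/negP => /andP [Eaw Ebw]; apply: (no_triangle Eab Ebw); rewrite Esym.
Qed.

Lemma codeg_le_pred_deg a b c : E b c -> ~~ E a c -> codeg a b <= (deg b).-1.
Proof.
move=> Ebc nEac; rewrite /deg (cardsD1 c) inE Ebc add1n /=.
apply/subset_leq_card/subsetP => w; rewrite !inE => /andP [Eaw ->]; rewrite andbT.
by apply: contraNneq nEac => <-.
Qed.

Lemma sum_codeg_mul_le b c : E b c ->
  \sum_a codeg a b * codeg a c <= nonadj b c * ((deg b).-1 * (deg c).-1).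
Proof.
move=> Ebc; rewrite /nonadj -sum1_card big_distrl /= [X in _ <= X]big_mkcond /=.
apply: leq_sum => a _; rewrite !inE negb_or.
have [Eba|nEba] := boolP (E b a); first by rewrite codeg_edge0 // Esym.
have [Eca|nEca] := boolP (E c a); first by rewrite [codeg a c]codeg_edge0 ?muln0 // Esym.
rewrite mul1n; apply: leq_mul; first by apply: codeg_le_pred_deg Ebc _; rewrite Esym.
by apply: (codeg_le_pred_deg (c := b)); rewrite Esym.
Qed.

Lemma deg_add_nonadj b c : E b c -> deg b + deg c + nonadj b c = #|V|.
Proof.
move=> Ebc; rewrite /nonadj -(cardsC (nbhd b :|: nbhd c)) cardsU.
by rewrite -/(codeg b c) codeg_edge0 // subn0.
Qed.

End Neighbourhoods.

Lemma half_split s : exists2 o, o <= 1 & s = (s./2).*2 + o.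
Proof. by exists (odd s); [case: odd | rewrite addnC odd_double_half]. Qed.

Lemma leq_mul_balanced x y a o : o <= 1 -> x + y = a.*2 + o -> x * y <= a * (a + o).
Proof. by move=> o1 e; have [xy|yx] := leqP x y; nia. Qed.

(* Bounds edge_weight b c + edge_weight c b (see below) in triangle-free graphs
   on n vertices.  It is the value on T_2(n), except for n = 5, where
   deg b = deg c = 2 and one vertex adjacent to neither give 12 instead of 10. *)
Definition max_edge_weight n :=
  if n == 5 then 12 else 5 * ((n./2).-1 * (n - n./2).-1 * (n - 4)).

Lemma cubic_shift_le s d :
  s ^ 2 * (5 * s + 12 * d + 2) <= (s + d) ^ 2 * (5 * (s + d) + 2).
Proof.
have -> : (s + d) ^ 2 * (5 * (s + d) + 2) = s ^ 2 * (5 * s + 12 * d + 2)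
  + d * (3 * s ^ 2 + 15 * s * d + 5 * d ^ 2 + 4 * s + 2 * d) by ring.
exact: leq_addr.
Qed.

Lemma cubic_le n : 7 <= n ->
  (n - 3) ^ 2 * (5 * (n - 3) + 2) <= 5 * ((n - 3) * (n - 1) * (n - 4)).
Proof.
move/subnK; move: (n - 7) => k <-; rewrite -!addnBA //=.
have -> : 5 * ((k + 4) * (k + 6) * (k + 3)) =
  (k + 4) ^ 2 * (5 * (k + 4) + 2) + (k + 4) * (3 * k + 2) by ring.
exact: leq_addr.
Qed.

Lemma leq_max_edge_weight x y t :
  5 * (x * x.-1 * y + y * y.-1 * x) + 12 * (t * (x * y)) <= max_edge_weight (x + y + t + 2).
Proof.
case: x => [|x]; first by rewrite !(mul0n, muln0).
case: y => [|y]; first by rewrite !(mul0n, muln0).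
rewrite [X in X <= _](_ : _ = x.+1 * y.+1 * (5 * (x + y) + 12 * t)); last by rewrite /=; ring.
set p := x.+1 * y.+1; set n := x.+1 + y.+1 + t + 2.
rewrite /max_edge_weight.
have [o o1] := half_split n; move: (n./2) => h eh.
have -> : n - h = h + o by lia.
have -> : (h + o).-1 = h.-1 + o by lia.
case: t @n eh => [|d] n eh.
- have pP : p <= h.-1 * (h.-1 + o) by apply: leq_mul_balanced; lia.
  rewrite muln0 addn0 (_ : x + y = n - 4); last by lia.
  case: eqP => [n5|_].
    have p2 : p <= 2 by apply: (leq_trans pP); lia.
    by rewrite n5; lia.
  by rewrite mulnCA leq_pmul2l // leq_mul2r pP orbT.
- (* With s = x + y, 4 * weight <= s^2 (5 s + 12 (t - 1) + 2), and this bound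
     only grows when the t - 1 units are moved from t to s. *)
  have L4 : 4 * (p * (5 * (x + y) + 12 * d.+1)) <= (n - 3) ^ 2 * (5 * (n - 3) + 2).
    rewrite (_ : n - 3 = x.+1 + y.+1 + d); last by lia.
    apply: leq_trans (cubic_shift_le _ _); rewrite mulnA leq_mul //; last by lia.
    exact: (nat_AGM2 _ _).1.
  case: ifP => [/eqP n5|n5]; first by move: L4; rewrite n5; lia.
  have [n6|n7] := leqP n 6.
    have [-> ->] : h = 3 /\ o = 0 by lia.
    by move: L4; rewrite (_ : n = 6) /=; lia.
  rewrite -(leq_pmul2l (isT : 0 < 4)); apply: leq_trans L4 _.
  have balanced : (n - 3) * (n - 1) <= 4 * (h.-1 * (h.-1 + o)) by nia.
  apply: leq_trans (_ : 5 * ((n - 3) * (n - 1) * (n - 4)) <= _).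
    exact: cubic_le.
  by rewrite [X in _ <= X]mulnCA leq_pmul2l // mulnA leq_mul2r balanced orbT.
Qed.

(** * The upper bound *)

Section UpperBound.
Variables (V : finType) (E : rel V).
Hypotheses (Esym : symmetric E) (Eirr : irreflexive E).
Hypothesis no_triangle : forall x y z, E x y -> E y z -> E z x -> False.
Local Notation deg := (deg E).
Local Notation nonadj := (nonadj E).

Lemma sum_deg_le : \sum_b deg b <= 2 * (#|V|./2 * (#|V| - #|V|./2)).
Proof.
have [V0|Vpos] := posnP #|V|; first by rewrite big_pred0 // => x; have := card0_eq V0 x.
have [u0 max_u0] := eq_bigmax deg Vpos.
have deg_le b : deg b <= deg u0 by rewrite -max_u0 leq_bigmax.
set N := nbhd E u0.
have cover : \sum_b deg b <= \sum_b \sum_(c | E b c) ((b \notin N) + (c \notin N)).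
  apply: leq_sum => b _; rewrite degE //; apply: leq_sum => c Ebc.
  rewrite !inE; case: (boolP (E u0 b)) => //= Eu0b; case: (boolP (E u0 c)) => //= Eu0c.
  by case: (no_triangle Eu0b Ebc); rewrite Esym.
have outside : \sum_b \sum_(c | E b c) (b \notin N) <= (#|V| - deg u0) * deg u0.
  rewrite -(cardsC N) addKn -sum1_card big_distrl /= [X in _ <= X]big_mkcond /=.
  apply: leq_sum => b _; rewrite sum_nat_cond_const -/(nbhd E b) -/(deg b) !inE.
  by case: (E u0 b); rewrite ?muln0 // muln1 mul1n.
have double : \sum_b \sum_(c | E b c) ((b \notin N) + (c \notin N)) =
              2 * \sum_b \sum_(c | E b c) (b \notin N).
  rewrite mul2n -addnn [X in _ = _ + X](sum_edges_sym Esym (fun b _ => b \notin N)).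
  by rewrite -big_split /=; apply: eq_bigr => b _; rewrite -big_split.
apply: (leq_trans cover); rewrite double leq_mul2l /=; apply: (leq_trans outside).
have [o o1 eh] := half_split #|V|; have Dn : deg u0 <= #|V| := max_card _.
rewrite (_ : #|V| - #|V|./2 = #|V|./2 + o); last by lia.
by apply: leq_mul_balanced o1 _; lia.
Qed.

(* The coefficients 5 and 6 make 5 |Aut K_{2,3}| = 6 |Aut C_5| = 60. *)
Definition edge_weight b c :=
  5 * ((deg b).-1 * (deg b).-2 * (deg c).-1) + 6 * (nonadj b c * ((deg b).-1 * (deg c).-1)).

Lemma edge_weight_pair_le b c : E b c ->
  edge_weight b c + edge_weight c b <= max_edge_weight #|V|.
Proof.
move=> Ebc; have := leq_max_edge_weight (deg b).-1 (deg c).-1 (nonadj b c).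
have db := deg_gt0 Esym (etrans (Esym c b) Ebc); have dc := deg_gt0 Esym Ebc.
rewrite -(deg_add_nonadj Esym no_triangle Ebc).
rewrite (_ : _ + 2 = deg b + deg c + nonadj b c); last by lia.
apply: leq_trans; apply: eq_leq.
have nonadjC : nonadj c b = nonadj b c by rewrite /nonadj setUC.
by rewrite /edge_weight nonadjC; ring.
Qed.

Lemma weighted_embeddings_le :
  5 * #|embeddings K23_rel E| + 6 * #|embeddings C5_rel E| <=
  \sum_b \sum_(c | E b c) edge_weight b c.
Proof.
have K23 := leq_trans (card_embeddings_K23_le E) (sum_codeg_ffact3_le Esym).
have C5 : #|embeddings C5_rel E| <=
    \sum_b \sum_(c | E b c) nonadj b c * ((deg b).-1 * (deg c).-1).
  apply: leq_trans (card_embeddings_C5_le E) _; apply: leq_sum => b _.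
  by apply: leq_sum => c; apply: sum_codeg_mul_le.
apply: leq_trans (leq_add (leq_mul (leqnn 5) K23) (leq_mul (leqnn 6) C5)) _.
rewrite !big_distrr -big_split; apply: leq_sum => b _ /=.
by rewrite !big_distrr -big_split; apply: leq_sum => c _.
Qed.

Lemma sum_edge_weight_le :
  2 * \sum_b \sum_(c | E b c) edge_weight b c <= max_edge_weight #|V| * \sum_b deg b.
Proof.
rewrite mul2n -addnn [X in X + _](sum_edges_sym Esym) -big_split big_distrr /=.
apply: leq_sum => b _; rewrite -big_split /= degE // big_distrr /=.
by apply: leq_sum => c Ebc; rewrite muln1 addnC edge_weight_pair_le.
Qed.

Lemma copies_upper_bound :
  60 * (#|copies K23_rel E| + #|copies C5_rel E|) <=
  max_edge_weight #|V| * (#|V|./2 * (#|V| - #|V|./2)).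
Proof.
have K23 := card_copies_K23_le Esym Eirr; have C5 := card_copies_C5_le Esym Eirr.
have chain : 2 * (60 * (#|copies K23_rel E| + #|copies C5_rel E|)) <=
             max_edge_weight #|V| * (2 * (#|V|./2 * (#|V| - #|V|./2))).
  apply: leq_trans (leq_mul (leqnn _) sum_deg_le).
  apply: leq_trans sum_edge_weight_le; rewrite leq_mul2l /=.
  apply: leq_trans weighted_embeddings_le.
  apply: leq_trans (leq_add (leq_mul (leqnn 5) K23) (leq_mul (leqnn 6) C5)).
  by apply: eq_leq; ring.
by move: chain; rewrite [X in _ <= X]mulnCA leq_pmul2l.
Qed.

End UpperBound.

Definition K23_T2 n := 'C(n./2, 2) * 'C(n - n./2, 3) + 'C(n - n./2, 2) * 'C(n./2, 3).

Lemma bin2_mul_bin3 a b : 12 * ('C(a, 2) * 'C(b, 3)) = a * a.-1 * (b * b.-1 * b.-2).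
Proof.
rewrite -[12]/(2`! * 3`!) mulnACA [2`! * _]mulnC [3`! * _]mulnC !bin_ffact.
by rewrite !ffactnS !ffactn0; ring.
Qed.

Lemma max_edge_weight_T2_lt n :
  max_edge_weight n * (n./2 * (n - n./2)) < 60 * (K23_T2 n).+1.
Proof.
rewrite /max_edge_weight; case: ifP => [/eqP -> //|_].
have -> : 5 * ((n./2).-1 * (n - n./2).-1 * (n - 4)) * (n./2 * (n - n./2)) = 60 * K23_T2 n.
  have -> : 60 * K23_T2 n = 5 * (12 * ('C(n./2, 2) * 'C(n - n./2, 3))
                                 + 12 * ('C(n - n./2, 2) * 'C(n./2, 3))).
    by rewrite /K23_T2; ring.
  rewrite !bin2_mul_bin3 -mulnA; congr (5 * _).
  have [o o1] := half_split n; move: (n./2) => a eh.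
  have -> : n - a = a + o by lia.
  have [a1|a2] := leqP a 1.
    by rewrite (_ : a.-1 = 0); [rewrite !(mul0n, muln0) | lia].
  rewrite (_ : n - 4 = a.-2 + (a + o).-2); last by lia.
  ring.
by rewrite ltn_pmul2l.
Qed.

Lemma simple_graphP (V : finType) (E : rel V) :
  reflect (irreflexive E /\ symmetric E) (simple_graph E).
Proof.
apply: (iffP andP) => [[/forallP irr /'forall_forallP sym] | [irr sym]].
  by split=> [x|x y]; [apply/negbTE/irr | apply/eqP/sym].
by split; [apply/forallP => x; rewrite irr | apply/'forall_forallP => x y; rewrite sym].
Qed.

Lemma triangle_freeP (V : finType) (E : rel V) :
  reflect (forall x y z, E x y -> E y z -> E z x -> False) (triangle_free E).
Proof.
apply: (iffP negP) => [tf x y z Exy Eyz Ezx | tf /existsP [x /existsP [y /existsP [z]]]].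
  apply: tf; apply/existsP; exists x; apply/existsP; exists y; apply/existsP; exists z.
  exact/and3P.
by case/and3P; apply: tf.
Qed.

Lemma numcopies_le_K23_T2 (V : finType) (E : rel V) :
  simple_graph E -> triangle_free E ->
  numcopies K23_rel E + numcopies C5_rel E <= K23_T2 #|V|.
Proof.
move=> /simple_graphP [Eirr Esym] /triangle_freeP no_triangle.
rewrite -ltnS -(ltn_pmul2l (isT : 0 < 60)).
exact: leq_ltn_trans (copies_upper_bound Esym Eirr no_triangle) (max_edge_weight_T2_lt _).
Qed.

(** * The balanced complete bipartite graph *)

Definition complete_bipartite (V : finType) (E : rel V) (L : {set V}) :=
  forall u w, E u w = ((u \in L) != (w \in L)).

Lemma complete_bipartite_simple_triangle_free (V : finType) (E : rel V) (L : {set V}) :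
  complete_bipartite E L -> simple_graph E && triangle_free E.
Proof.
move=> EL; apply/andP; split.
  by apply/simple_graphP; split=> [u|u w]; rewrite !EL ?eqxx // eq_sym.
apply/triangle_freeP => x y z; rewrite !EL.
by case: (x \in L); case: (y \in L); case: (z \in L).
Qed.

Lemma K23_copy_on (V : finType) (E : rel V) (U X : {set V}) :
  #|U| = 2 -> #|X| = 3 -> [disjoint U & X] ->
  {in U & X, forall u x, E u x && E x u} ->
  exists2 p, p \in copies K23_rel E & p.1 = U :|: X.
Proof.
move=> U2 X3 UX adj.
pose f : {ffun 'I_2 + 'I_3 -> V} := [ffun v => match v with
  | inl i => enum_val (cast_ord (esym U2) i)
  | inr j => enum_val (cast_ord (esym X3) j) end].
have fU i : f (inl i) \in U by rewrite ffunE enum_valP.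
have fX j : f (inr j) \in X by rewrite ffunE enum_valP.
have fUX i j : f (inl i) != f (inr j).
  by apply: contraTneq UX => e; apply/pred0Pn; exists (f (inl i)); rewrite /= fU e fX.
exists (copy_of K23_rel f); last first.
  apply/setP => w; rewrite !inE; apply/imsetP/orP => [[[i|j] _ ->]|[wU|wX]].
  - by left.
  - by right.
  - exists (inl (cast_ord U2 (enum_rank_in wU w))) => //.
    by rewrite ffunE cast_ordK enum_rankK_in.
  - exists (inr (cast_ord X3 (enum_rank_in wX w))) => //.
    by rewrite ffunE cast_ordK enum_rankK_in.
apply/copy_of_embedding/embeddingP; split=> [[i|j] [i'|j']|[i|j] [i'|j'] //= _].
- by rewrite !ffunE => /enum_val_inj /cast_ord_inj ->.
- by move/eqP; rewrite (negPf (fUX _ _)).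
- by move/esym/eqP; rewrite (negPf (fUX _ _)).
- by rewrite !ffunE => /enum_val_inj /cast_ord_inj ->.
- by case/andP: (adj _ _ (fU i) (fX j')).
- by case/andP: (adj _ _ (fU i') (fX j)).
Qed.

Lemma setIU_subset (T : finType) (A U X : {set T}) :
  U \subset A -> X \subset ~: A -> (U :|: X) :&: A = U.
Proof.
by move=> UA XA; rewrite setIUl (setIidPl UA) disjoint_setI0 ?setU0 // disjoints_subset.
Qed.

(* Distinct pairs (U, X) of a 2-set and a 3-set on opposite sides span
   distinct vertex sets, each of which carries a copy of K_{2,3}. *)
Lemma K23_copies_complete_bipartite (V : finType) (E : rel V) (L : {set V}) :
  complete_bipartite E L ->
  'C(#|L|, 2) * 'C(#|~: L|, 3) + 'C(#|~: L|, 2) * 'C(#|L|, 3) <= #|copies K23_rel E|.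
Proof.
move=> EL.
pose draws (A : {set V}) k := [set S : {set V} | S \subset A & #|S| == k].
pose P := setX (draws L 2) (draws (~: L) 3) :|: setX (draws (~: L) 2) (draws L 3).
have inP p : p \in P -> exists A : {set V}, [/\ p.1 \subset A, p.2 \subset ~: A,
    #|p.1| = 2, #|p.2| = 3 & (A = L \/ A = ~: L)].
  rewrite !inE => /orP [] /andP [/andP [UA /eqP U2] /andP [XA /eqP X3]].
    by exists L; split=> //; left.
  by exists (~: L); rewrite setCK; split=> //; right.
have cardP : #|P| = 'C(#|L|, 2) * 'C(#|~: L|, 3) + 'C(#|~: L|, 2) * 'C(#|L|, 3).
  rewrite cardsU !cardsX !cards_draws (_ : _ :&: _ = set0) ?cards0 ?subn0 //.
  apply/setP => -[U X]; rewrite !inE /=.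
  apply/negP => /and4P [/and3P [/andP [UL _] _ _] /andP [UL' /eqP U2] _ _].
  move: U2; rewrite (_ : U = set0) ?cards0 //.
  by apply/eqP; rewrite -subset0 -(setICr L) subsetI UL UL'.
pose decode W := if #|W :&: L| == 2 then (W :&: L, W :&: ~: L) else (W :&: ~: L, W :&: L).
have decodeK : {in P, cancel (fun p => p.1 :|: p.2) decode}.
  move=> [U X] /inP [A [/= UA XA U2 X3 [|] eA]]; subst A; rewrite /decode.
    by rewrite setIU_subset // setUC setIU_subset ?setCK // U2.
  rewrite setCK in XA.
  by rewrite setUC setIU_subset // X3 setUC setIU_subset ?setCK.
rewrite -cardP -(card_in_imset (can_in_inj decodeK)).
apply: leq_trans (leq_imset_card fst (copies K23_rel E)).
apply/subset_leq_card/subsetP => _ /imsetP [[U X] /inP [A [/= UA XA U2 X3 eA]] ->].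
have [||p pc <-] := @K23_copy_on _ E U X U2 X3; last exact: imset_f.
  by rewrite disjoints_subset (subset_trans UA) // -setCS setCK.
move=> u x /(subsetP UA) uA /(subsetP XA); rewrite inE => /negPf xA; rewrite !EL.
case: eA uA xA => -> uA xA; first by rewrite uA xA.
by move: uA xA; rewrite !inE => /negPf -> /negbFE ->.
Qed.

Definition T2_left n : {set 'I_n} := [set i : 'I_n | i < n./2].

Lemma T2_complete_bipartite n : complete_bipartite (T2_rel n) (T2_left n).
Proof. by move=> u w; rewrite !inE. Qed.

Lemma card_ord_lt n m : m <= n -> #|[set i : 'I_n | i < m]| = m.
Proof. by move=> mn; rewrite -sum1dep_card (big_ord_narrow mn) /= sum1_card card_ord. Qed.

Lemma K23_T2_le_numcopies n : K23_T2 n <= numcopies K23_rel (T2_rel n).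
Proof.
have cardL : #|T2_left n| = n./2.
  by rewrite card_ord_lt // -{2}(odd_double_half n) -addnn addnA leq_addl.
have cardCL : #|~: T2_left n| = n - n./2.
  by have := cardsC (T2_left n); rewrite card_ord cardL; lia.
by have := K23_copies_complete_bipartite (@T2_complete_bipartite n); rewrite cardL cardCL.
Qed.

Theorem mainTheorem13 (n : nat) :
  ex_K23_C5 n = numcopies K23_rel (T2_rel n) + numcopies C5_rel (T2_rel n).
Proof.
apply/eqP; rewrite eqn_leq; apply/andP; split.
  apply/bigmax_leqP => S /andP [simpleS tfS].
  apply: leq_trans (numcopies_le_K23_T2 simpleS tfS) _.
  by rewrite card_ord (leq_trans (K23_T2_le_numcopies n)) ?leq_addr.
pose S0 := [set p : 'I_n * 'I_n | T2_rel n p.1 p.2].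
have S0E : rel_of_set S0 =2 T2_rel n by move=> u w; rewrite /rel_of_set inE.
rewrite /numcopies -!(copies_eq_rel _ S0E); apply: (leq_bigmax_cond S0).
apply: (complete_bipartite_simple_triangle_free (L := T2_left n)) => u w.
by rewrite S0E T2_complete_bipartite.
Qed.
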